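(* (a) Let $n=1$ and let $m,\hat m\in A_1$ be monomials with multi-degrees $(r,s)$ and $(\hat r,\hat s)$. (a1) If $[m,\hat m]=0$ then $s\hat r=r\hat s$. (a2) If $\hat r=\hat s\neq0$ and $[m,\hat m]=0$, then $r=s$. (b) Let $m,\hat m\in A_n$ be monomials with multi-degrees $(\alpha,\beta)$ and $(\hat\alpha,\hat\beta)$. (b1) If $[m,\hat m]=0$ then $\beta_j\hat\alpha_j=\alpha_j\hat\beta_j$ for all $j\in\{1,\dots,n\}$. (b2) If $\hat\alpha=\hat\beta$ and $[m,\hat m]=0$, then $\alpha_j=\beta_j$ for every index $j$ with $\hat\alpha_j\neq0$. (c) Let $m,\tilde m\in A_n$ be monomials with multi-degrees $(\alpha,\beta)$ and $(\tilde\alpha,\tilde\alpha)$. Then $[m,\tilde m]=0$ if and only if $\alpha_j=\beta_j$ for every index $j$ with $\tilde\alpha_j\neq0$.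
   Context: Fix $n\ge 1$. The Weyl algebra $A_n$ is the unital associative $\mathbb{C}$-algebra generated by $a_1,\dots,a_n,a_1^\dagger,\dots,a_n^\dagger$ subject to $[a_i,a_j^\dagger]=\delta_{ij}$ and $[a_i,a_j]=[a_i^\dagger,a_j^\dagger]=0$, where $[x,y]=xy-yx$. A monomial is a finite product (in any order) of the generators $a_j,a_j^\dagger$; its multi-degree $\mathrm{mdeg}(m)=(\alpha,\beta)\in\mathbb N_0^{2n}$ records the number $\alpha_j$ of factors $a_j^\dagger$ and the number $\beta_j$ of factors $a_j$. *)

(* The Weyl algebra A_n over the complex numbers, defined
   literally as the free algebra on a_1..a_n, a_1^+..a_n^+ modulo the
   two-sided ideal generated by the canonical commutation relations. *)
From HB Require Import structures.
From mathcomp Require Import all_boot all_order all_algebra.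
From mathcomp Require Import complex.
From mathcomp Require Import Rstruct.
Set Implicit Arguments. Unset Strict Implicit. Unset Printing Implicit Defensive.
Import Order.TTheory GRing.Theory Num.Theory.
Local Open Scope ring_scope.

Definition CC : Type := complex Rdefinitions.R.

(* Generators of A_n: inl j = a_j (annihilator), inr j = a_j^dagger. *)
Definition gen (n : nat) : Type := ('I_n + 'I_n)%type.
Definition ann {n} (j : 'I_n) : gen n := inl j.
Definition cre {n} (j : 'I_n) : gen n := inr j.

(* Monomials = finite words in the generators (product in the given order). *)
Definition word (n : nat) : Type := seq (gen n).

Definition mdeg_alpha {n} (m : word n) (j : 'I_n) : nat := count (pred1 (cre j)) m.
Definition mdeg_beta {n} (m : word n) (j : 'I_n) : nat := count (pred1 (ann j)) m.

(* Elements of the free algebra C<gens>, as formal finite linear combinations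
   of words; two formal sums denote the same element iff they have the same
   coefficient function. *)
Definition fsum (n : nat) : Type := seq (CC * word n).
Definition coef {n} (p : fsum n) (w : word n) : CC :=
  \sum_(x <- p | x.2 == w) x.1.
Definition fscale {n} (c : CC) (p : fsum n) : fsum n :=
  [seq (c * x.1, x.2) | x <- p].
Definition sandwich {n} (u : word n) (p : fsum n) (v : word n) : fsum n :=
  [seq (x.1, u ++ x.2 ++ v) | x <- p].

Definition weyl_rel {n} (r : fsum n) : Prop :=
  exists i j : 'I_n,
    r = [:: (1, [:: ann i; cre j]); (-1, [:: cre j; ann i]);
            (- (if i == j then 1 else 0), [::])]
 \/ r = [:: (1, [:: ann i; ann j]); (-1, [:: ann j; ann i])]
 \/ r = [:: (1, [:: cre i; cre j]); (-1, [:: cre j; cre i])].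

Inductive in_ideal {n} : fsum n -> Prop :=
| ideal_nil : in_ideal [::]
| ideal_gen c u r v : weyl_rel r -> in_ideal (fscale c (sandwich u r v))
| ideal_add p q : in_ideal p -> in_ideal q -> in_ideal (p ++ q)
| ideal_ext p q : coef p =1 coef q -> in_ideal p -> in_ideal q.

Definition weyl_eq {n} (p q : fsum n) : Prop := in_ideal (p ++ fscale (-1) q).

Definition weyl_commute {n} (m m' : word n) : Prop :=
  weyl_eq [:: (1, m ++ m')] [:: (1, m' ++ m)].

(* Everything except the "if" direction of (c) follows from the identity
   beta_j * alpha'_j = alpha_j * beta'_j for commuting monomials m, m'.  To see it,
   let A_n act on vectors e_s indexed by states s : 'I_n -> R, R commutative, by
   a_i e_s = s_i e_(s - 1_i) and a_i^dagger e_s = e_(s + 1_i).  A monomial w sends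
   e_s to c_w(s) e_(s + alpha(w) - beta(w)), so commuting monomials give
   c_(m m') = c_(m' m).  Taking R = C[X], s_j = X and s_l = X^2 for l <> j, the
   scalar c_w is a product of monic factors X + t (one for each a_j in w) and
   X^2 + t (one for each other annihilator), so its coefficient just below the
   leading one is the sum of the shifts t of the a_j-factors; comparing it for
   m m' and m' m yields the identity.
   For the "if" direction of (c), a letter of the balanced monomial m' and a dual
   letter further right can be brought together by transpositions, each of which
   costs only a shorter balanced monomial; the pair a_j^dagger a_j or a_j a_j^dagger
   commutes with m because [a_j^dagger a_j, m] = (alpha_j - beta_j) m. *)

From mathcomp Require Import all_boot all_order all_algebra.
From mathcomp Require Import complex ring Rstruct zify.
From Stdlib Require Import Classical.
Set Implicit Arguments. Unset Strict Implicit. Unset Printing Implicit Defensive.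
Import Order.TTheory GRing.Theory Num.Theory.
Local Open Scope ring_scope.

Section FormalSums.
Variable n : nat.
Implicit Types (p q : fsum n) (u v w : word n) (c : CC).

Lemma coef_nil w : coef ([::] : fsum n) w = 0.
Proof. by rewrite /coef big_nil. Qed.

Lemma coef_cons c u p w :
  coef ((c, u) :: p) w = (if u == w then c else 0) + coef p w.
Proof. by rewrite /coef big_cons; case: ifP; rewrite ?add0r. Qed.

Lemma coef_cat p q w : coef (p ++ q) w = coef p w + coef q w.
Proof. by rewrite /coef big_cat. Qed.

Lemma coef_fscale c p w : coef (fscale c p) w = c * coef p w.
Proof. by rewrite /coef big_map big_distrr. Qed.

Lemma coef_map_inj (f : word n -> word n) p q : injective f ->
  coef p =1 coef q ->
  coef [seq (x.1, f x.2) | x <- p] =1 coef [seq (x.1, f x.2) | x <- q].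
Proof.
move=> f_inj pq w; rewrite /coef !big_map.
have [[w' <-] | /= not_img] := classic (exists w', f w' = w).
  have E r : \sum_(x <- r | f x.2 == f w') x.1 = \sum_(x <- r | x.2 == w') x.1.
    by apply: eq_bigl => x; rewrite inj_eq.
  by rewrite !E; apply: pq.
by rewrite !big_pred0 // => x; apply/eqP => fx; apply: not_img; exists x.2.
Qed.

Lemma sandwich_fscale u v c p : sandwich u (fscale c p) v = fscale c (sandwich u p v).
Proof. by rewrite /sandwich /fscale -!map_comp. Qed.

Lemma ideal_fscale c p : in_ideal p -> in_ideal (fscale c p).
Proof.
elim=> [|c' u r v rel|{}p q _ Ip _ Iq|{}p q pq _ Ip].
- exact: ideal_nil.
- have -> : fscale c (fscale c' (sandwich u r v)) = fscale (c * c') (sandwich u r v).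
    by rewrite /fscale -map_comp; apply: eq_map => x /=; rewrite mulrA.
  exact: ideal_gen.
- by rewrite /fscale map_cat; apply: ideal_add.
- by apply: ideal_ext Ip => w; rewrite !coef_fscale pq.
Qed.

Lemma cat_sandwich_inj u v : injective (fun w => u ++ w ++ v).
Proof.
move=> x y /(congr1 (drop (size u))); rewrite !drop_size_cat //.
move/(congr1 (fun s => take (size s - size v) s)).
by rewrite !size_cat !addnK !take_size_cat.
Qed.

Lemma ideal_sandwich u v p : in_ideal p -> in_ideal (sandwich u p v).
Proof.
elim=> [|c u' r v' rel|{}p q _ Ip _ Iq|{}p q pq _ Ip].
- exact: ideal_nil.
- rewrite sandwich_fscale.
  have -> : sandwich u (sandwich u' r v') v = sandwich (u ++ u') r (v' ++ v).
    by rewrite /sandwich -map_comp; apply: eq_map => x /=; rewrite !catA.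
  exact: ideal_gen.
- by rewrite /sandwich map_cat; apply: ideal_add.
- apply: ideal_ext Ip; apply: (coef_map_inj (f := fun w => u ++ w ++ v)) pq.
  exact: cat_sandwich_inj.
Qed.

Lemma weyl_eq_coef p q : coef p =1 coef q -> weyl_eq p q.
Proof.
move=> pq; apply: ideal_ext ideal_nil => w.
by rewrite coef_nil coef_cat coef_fscale pq mulN1r subrr.
Qed.

Lemma weyl_eq_refl p : weyl_eq p p.
Proof. exact: weyl_eq_coef. Qed.

Lemma weyl_eq_sym p q : weyl_eq p q -> weyl_eq q p.
Proof.
move/(ideal_fscale (-1)); apply: ideal_ext => w.
rewrite !(coef_cat, coef_fscale); ring.
Qed.

Lemma weyl_eq_trans q p r : weyl_eq p q -> weyl_eq q r -> weyl_eq p r.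
Proof.
move=> pq qr; apply: ideal_ext (ideal_add pq qr) => w.
rewrite !(coef_cat, coef_fscale); ring.
Qed.

Lemma weyl_eq_cat p q p' q' :
  weyl_eq p q -> weyl_eq p' q' -> weyl_eq (p ++ p') (q ++ q').
Proof.
move=> pq pq'; apply: ideal_ext (ideal_add pq pq') => w.
rewrite !(coef_cat, coef_fscale); ring.
Qed.

Lemma weyl_eq_fscale c p q : weyl_eq p q -> weyl_eq (fscale c p) (fscale c q).
Proof.
move/(ideal_fscale c); apply: ideal_ext => w.
rewrite !(coef_cat, coef_fscale); ring.
Qed.

Lemma weyl_eq_sandwich u v p q :
  weyl_eq p q -> weyl_eq (sandwich u p v) (sandwich u q v).
Proof.
by move/(ideal_sandwich u v); rewrite /weyl_eq -sandwich_fscale /sandwich map_cat.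
Qed.

Lemma sum_fsum_coef (V : lmodType CC) p (H : word n -> V) (ws : seq (word n)) :
  uniq ws -> {subset map snd p <= ws} ->
  \sum_(x <- p) x.1 *: H x.2 = \sum_(w <- ws) coef p w *: H w.
Proof.
move=> uniq_ws; elim: p => [|[c u] p IHp] sub_p.
  by rewrite big_nil big1 // => w _; rewrite coef_nil scale0r.
rewrite big_cons IHp => [|w w_p]; last by apply: sub_p; rewrite inE w_p orbT.
under [RHS]eq_bigr => w _ do rewrite coef_cons scalerDl.
rewrite big_split /=; congr (_ + _).
rewrite (bigD1_seq u) ?sub_p ?mem_head //= eqxx big1 ?addr0 // => w.
by rewrite eq_sym => /negbTE ->; rewrite scale0r.
Qed.

End FormalSums.

Section Commutation.
Variable n : nat.
Implicit Types (p q : fsum n) (m u v w : word n) (c : CC).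

Lemma ann_eq (i j : 'I_n) : (ann i == ann j) = (i == j).
Proof. by []. Qed.

Lemma cre_eq (i j : 'I_n) : (cre i == cre j) = (i == j).
Proof. by []. Qed.

Definition gen_bracket (x y : gen n) : CC :=
  match x, y with
  | inl i, inr j => if i == j then 1 else 0
  | inr j, inl i => if i == j then -1 else 0
  | _, _ => 0
  end.

Lemma weyl_eq_swap u v x y :
  weyl_eq [:: (1, u ++ x :: y :: v)]
          [:: (1, u ++ y :: x :: v); (gen_bracket x y, u ++ v)].
Proof.
have from_rel c r p q : weyl_rel r ->
    coef (fscale c (sandwich u r v)) =1 coef (p ++ fscale (-1) q) -> weyl_eq p q.
  by move=> rel pq; apply: ideal_ext pq (ideal_gen c u v rel).
case: x y => i [] j; [
  apply: (from_rel 1); first by exists i, j; right; left |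
  apply: (from_rel 1); first by exists i, j; left |
  apply: (from_rel (-1)); first by exists j, i; left |
  apply: (from_rel 1); first by exists i, j; right; right ];
by move=> w; rewrite /fscale /sandwich /ann /cre /= !coef_cons coef_nil;
  do !case: ifP => _; ring.
Qed.

Section CommutingWith.
Variable m : word n.

Definition commutes p := weyl_eq (sandwich m p [::]) (sandwich [::] p m).

Lemma commutes_weyl_eq p q : weyl_eq p q -> commutes q -> commutes p.
Proof.
move=> pq mq; apply: weyl_eq_trans (weyl_eq_sandwich m [::] pq) _.
exact: weyl_eq_trans mq (weyl_eq_sandwich _ _ (weyl_eq_sym pq)).
Qed.

Lemma commutes_cat p q : commutes p -> commutes q -> commutes (p ++ q).
Proof. by rewrite /commutes /sandwich !map_cat; apply: weyl_eq_cat. Qed.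

Lemma weyl_commuteE w : weyl_commute m w <-> commutes [:: (1, w)].
Proof. by rewrite /commutes /sandwich /weyl_commute /= cats0. Qed.

Lemma commutes_term c w : (c = 0 \/ weyl_commute m w) -> commutes [:: (c, w)].
Proof.
have -> : [:: (c, w)] = fscale c [:: (1, w)] by rewrite /fscale /= mulr1.
rewrite /commutes !sandwich_fscale => -[-> | /weyl_commuteE mw].
  by apply: weyl_eq_coef => w'; rewrite !coef_fscale !mul0r.
exact: weyl_eq_fscale.
Qed.

Lemma weyl_commute_nil : weyl_commute m [::].
Proof. by rewrite /weyl_commute cats0; apply: weyl_eq_refl. Qed.

Lemma weyl_commute_cat u v :
  weyl_commute m u -> weyl_commute m v -> weyl_commute m (u ++ v).
Proof.
move=> /(weyl_eq_sandwich [::] v) mu /(weyl_eq_sandwich u [::]) mv.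
move: mu mv; rewrite /sandwich /= !cats0 -!catA /= => mu mv.
by rewrite /weyl_commute -catA; apply: weyl_eq_trans mu mv.
Qed.

Lemma weyl_commute_swap u v x y :
  weyl_commute m (u ++ y :: x :: v) ->
  (gen_bracket x y != 0 -> weyl_commute m (u ++ v)) ->
  weyl_commute m (u ++ x :: y :: v).
Proof.
move=> /weyl_commuteE m_yx m_uv; apply/weyl_commuteE.
apply: commutes_weyl_eq (weyl_eq_swap u v x y) _.
apply: (@commutes_cat [:: _] [:: _]) m_yx _; apply: commutes_term.
by have [|/m_uv] := eqVneq (gen_bracket x y) 0; [left | right].
Qed.

End CommutingWith.
End Commutation.

Section NumberOperator.
Variables (n : nat) (j : 'I_n).
Implicit Types (m u v w : word n) (x y : gen n).

Definition weight w : CC := (mdeg_alpha w j)%:R - (mdeg_beta w j)%:R.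

Lemma weight_cat u v : weight (u ++ v) = weight u + weight v.
Proof. by rewrite /weight /mdeg_alpha /mdeg_beta !count_cat !natrD; ring. Qed.

Lemma weight_swap x y : weight [:: x; y] = weight [:: y; x].
Proof. by rewrite /weight /mdeg_alpha /mdeg_beta /= !natrD; ring. Qed.

Lemma weyl_eq_number_letter x :
  weyl_eq [:: (1, [:: cre j; ann j; x])]
          [:: (1, [:: x; cre j; ann j]); (weight [:: x], [:: x])].
Proof.
apply: weyl_eq_trans (weyl_eq_swap [:: cre j] [::] (ann j) x) _.
apply: weyl_eq_trans
  (@weyl_eq_cat _ [:: _] _ _ _ (weyl_eq_swap [::] [:: ann j] (cre j) x)
     (weyl_eq_refl [:: (gen_bracket (ann j) x, [:: cre j])])) _.
apply: weyl_eq_coef => w; rewrite /weight /mdeg_alpha /mdeg_beta /ann /cre.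
case: x => i /=; rewrite !coef_cons coef_nil ?ann_eq ?cre_eq;
  case: (eqVneq i j) => [->|ij]; rewrite ?eqxx ?(negbTE ij) /=;
  do !case: ifP => _; ring.
Qed.

Lemma weyl_eq_number m :
  weyl_eq [:: (1, [:: cre j; ann j] ++ m)]
          [:: (1, m ++ [:: cre j; ann j]); (weight m, m)].
Proof.
elim: m => [|x m IHm].
  apply: weyl_eq_coef => w; rewrite /weight /= !coef_cons coef_nil.
  by do !case: ifP => _; ring.
have := weyl_eq_sandwich [::] m (weyl_eq_number_letter x).
have := weyl_eq_sandwich [:: x] [::] IHm.
rewrite /sandwich /= !cats0 => IHm' Nx.
apply: weyl_eq_trans Nx _.
apply: weyl_eq_trans (@weyl_eq_cat _ [:: _] _ [:: _] _ IHm'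
  (weyl_eq_refl [:: (weight [:: x], x :: m)])) _.
apply: weyl_eq_coef => w; rewrite /weight /mdeg_alpha /mdeg_beta /= !natrD.
by rewrite !coef_cons coef_nil; do !case: ifP => _; ring.
Qed.

Lemma weyl_commute_number m :
  mdeg_alpha m j = mdeg_beta m j -> weyl_commute m [:: cre j; ann j].
Proof.
move=> bal; apply/weyl_eq_sym/(weyl_eq_trans (weyl_eq_number m)).
apply: weyl_eq_coef => w.
by rewrite /weight bal subrr !coef_cons coef_nil if_same !addr0.
Qed.

Lemma weyl_commute_antinumber m :
  mdeg_alpha m j = mdeg_beta m j -> weyl_commute m [:: ann j; cre j].
Proof.
move=> bal; apply: (@weyl_commute_swap _ m [::] [::]) => [|_].
  exact: weyl_commute_number.
exact: weyl_commute_nil.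
Qed.

End NumberOperator.

Section BalancedWords.
Variable n : nat.
Implicit Types (m u v w : word n) (g x y : gen n).

Definition gen_index g : 'I_n := match g with inl i | inr i => i end.

Definition gen_dual g : gen n := match g with inl i => inr i | inr i => inl i end.

Definition balanced w := forall j, mdeg_alpha w j = mdeg_beta w j.

Lemma gen_bracket_dual x y : gen_bracket x y != 0 -> y = gen_dual x.
Proof. by case: x y => i [] j //=; case: (eqVneq i j) => [->|]; rewrite ?eqxx. Qed.

Lemma gen_dualK : involutive gen_dual.
Proof. by case. Qed.

Lemma balanced_perm w w' : perm_eq w w' -> balanced w -> balanced w'.
Proof. by move=> /permP ww' bal j; move: (bal j); rewrite /mdeg_alpha /mdeg_beta !ww'. Qed.

Lemma balanced_dual_pair g w : balanced [:: g, gen_dual g & w] -> balanced w.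
Proof.
move=> bal j; move/(_ j): bal; rewrite /mdeg_alpha /mdeg_beta.
by case: g => i /=; rewrite ?ann_eq ?cre_eq; case: (i == j) => /=; lia.
Qed.

Lemma balanced_dual_mem g w : balanced (g :: w) -> gen_dual g \in w.
Proof.
move/(_ (gen_index g)); rewrite /mdeg_alpha /mdeg_beta -has_pred1 has_count.
by case: g => i /=; rewrite ?ann_eq ?cre_eq eqxx /cre /ann /=; lia.
Qed.

Lemma balanced_mdeg_alpha w g :
  balanced w -> g \in w -> mdeg_alpha w (gen_index g) != 0%N.
Proof.
move=> bal; case: g => i /=; [rewrite bal|];
  by rewrite -lt0n /mdeg_alpha /mdeg_beta -has_count has_pred1.
Qed.

Lemma weyl_commute_move m u p y v :
  weyl_commute m (u ++ y :: p ++ v) ->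
  (forall p1 x p2, p = p1 ++ x :: p2 -> gen_bracket x y != 0 ->
     weyl_commute m (u ++ p1 ++ p2 ++ v)) ->
  weyl_commute m (u ++ p ++ y :: v).
Proof.
elim/last_ind: p v => [|p x IHp] v // m_yp m_drop.
rewrite cat_rcons catA; apply: (weyl_commute_swap (u := u ++ p)).
  rewrite -catA; apply: IHp; first by rewrite cat_rcons in m_yp.
  move=> p1 x' p2 def_p; rewrite -cat_rcons; apply: m_drop.
  by rewrite def_p rcons_cat.
by move=> xy; rewrite -catA; apply: (m_drop p x [::]); rewrite ?cats1.
Qed.

Lemma weyl_commute_balanced m w : balanced w ->
  {in w, forall g, mdeg_alpha m (gen_index g) = mdeg_beta m (gen_index g)} ->
  weyl_commute m w.
Proof.
have [k] := ubnP (size w); elim: k w => // k IHk [|g w] /= size_w bal m_bal.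
  exact: weyl_commute_nil.
have shrink w' : perm_eq (g :: w) [:: g, gen_dual g & w'] -> weyl_commute m w'.
  move=> perm_w; apply: IHk.
  - move: size_w (perm_size perm_w) => /= lt_wk [wE].
    by move: lt_wk; rewrite wE ltnS => /ltnW.
  - exact/(balanced_dual_pair (g := g))/(balanced_perm perm_w).
  - by apply: sub_in1 m_bal => x x_w'; rewrite (perm_mem perm_w) !inE x_w' !orbT.
move: shrink; have := balanced_dual_mem bal; case/splitPr=> u v shrink.
apply: (@weyl_commute_move m [:: g]) => [|u1 x u2 def_u /gen_bracket_dual].
  apply: (@weyl_commute_cat _ m [:: g; _]); last first.
    by apply: shrink; rewrite perm_cons -(cat1s (gen_dual g) v) perm_catCA.
  have := m_bal g (mem_head _ _).
  case: g {shrink bal m_bal} => i.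
    exact: weyl_commute_antinumber.
  exact: weyl_commute_number.
move=> /(can_inj gen_dualK) g_x; subst x.
apply: shrink; rewrite def_u perm_cons.
by apply/permP => P; rewrite /= !count_cat /=; lia.
Qed.

End BalancedWords.

Section Fock.
Variables (n : nat) (R : comAlgType CC).
Implicit Types (p q : fsum n) (u v w : word n) (s : {ffun 'I_n -> R})
  (F : {ffun 'I_n -> R} -> R).

(* A word w sends the basis vector e_s to [fock_coef w s] e_[fock_state w s], where
   a_i e_s = s_i e_(s - 1_i) and a_i^dagger e_s = e_(s + 1_i); [fock_apply w] is the
   transposed action of w on functions of the state. *)
Definition fock_state w s : {ffun 'I_n -> R} := [ffun l => s l + (weight l w)%:A].

Definition gen_coef (g : gen n) s : R := if g is inl i then s i else 1.

Fixpoint fock_coef w s : R :=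
  if w is g :: w' then gen_coef g (fock_state w' s) * fock_coef w' s else 1.

Definition fock_apply w F s : R := fock_coef w s * F (fock_state w s).

Definition fock_pairing p F s : R := \sum_(x <- p) x.1 *: fock_apply x.2 F s.

Lemma fock_state_weight u v s :
  (forall l, weight l u = weight l v) -> fock_state u s = fock_state v s.
Proof. by move=> uv; apply/ffunP => l; rewrite !ffunE uv. Qed.

Lemma fock_state_nil s : fock_state [::] s = s.
Proof.
by apply/ffunP => l; rewrite ffunE /weight /mdeg_alpha /mdeg_beta /= subrr scale0r addr0.
Qed.

Lemma fock_state_cat u v s : fock_state (u ++ v) s = fock_state u (fock_state v s).
Proof. by apply/ffunP => l; rewrite !ffunE weight_cat scalerDl addrA addrAC. Qed.

Lemma fock_coef_cat u v s :
  fock_coef (u ++ v) s = fock_coef u (fock_state v s) * fock_coef v s.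
Proof.
elim: u => [|g u IHu] /=; first by rewrite mul1r.
by rewrite IHu fock_state_cat mulrA.
Qed.

Lemma fock_apply_cat u v F : fock_apply (u ++ v) F =1 fock_apply v (fock_apply u F).
Proof. by move=> s; rewrite /fock_apply fock_coef_cat fock_state_cat mulrCA mulrA. Qed.

Lemma fock_pairing_coef p q : coef p =1 coef q ->
  forall F s, fock_pairing p F s = fock_pairing q F s.
Proof.
move=> pq F s; set ws := undup (map snd (p ++ q)).
have [sub_p sub_q] : {subset map snd p <= ws} /\ {subset map snd q <= ws}.
  by split=> w w_pq; rewrite mem_undup map_cat mem_cat w_pq ?orbT.
rewrite /fock_pairing (sum_fsum_coef (fun w => fock_apply w F s) (undup_uniq _) sub_p).
rewrite (sum_fsum_coef (fun w => fock_apply w F s) (undup_uniq _) sub_q).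
by apply: eq_bigr => w _; rewrite pq.
Qed.

Lemma fock_state_swap (x y : gen n) s :
  fock_state [:: x; y] s = fock_state [:: y; x] s.
Proof. by apply: fock_state_weight => l; apply: weight_swap. Qed.

Lemma fock_state_number i s : fock_state [:: cre i; ann i] s = s.
Proof.
rewrite -[RHS]fock_state_nil; apply: fock_state_weight => l.
by rewrite /weight /mdeg_alpha /mdeg_beta /= cre_eq ann_eq !subrr.
Qed.

Lemma fock_pairing_rel r : weyl_rel r -> forall F s, fock_pairing r F s = 0.
Proof.
case=> i [j [->|[->|->]]] F s; rewrite /fock_pairing /fock_apply !big_cons big_nil /=.
all: rewrite fock_state_swap.
all: rewrite ?ffunE /weight /mdeg_alpha /mdeg_beta /= ?ann_eq ?cre_eq.
all: rewrite ?[j == i]eq_sym; case: (eqVneq i j) => [<-|ij]; rewrite ?eqxx ?(negbTE ij) /=.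
all: rewrite ?fock_state_nil ?fock_state_number ?mulr0n ?mulr1n ?subr0 ?subrr ?oppr0.
all: rewrite ?scaleN1r ?scale1r ?scale0r; ring.
Qed.

Lemma fock_pairing_ideal p : in_ideal p -> forall F s, fock_pairing p F s = 0.
Proof.
elim=> [|c u r v rel|{}p q _ Ip _ Iq|{}p q pq _ Ip] F s.
- by rewrite /fock_pairing big_nil.
- have -> : fock_pairing (fscale c (sandwich u r v)) F s =
      c *: (fock_coef v s * fock_pairing r (fock_apply u F) (fock_state v s)).
    rewrite /fock_pairing /fscale /sandwich -map_comp big_map mulr_sumr scaler_sumr.
    apply: eq_bigr => x _ /=; rewrite !fock_apply_cat {1}/fock_apply.
    by rewrite -scalerA scalerAr.
  by rewrite fock_pairing_rel // mulr0 scaler0.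
- by move: (Ip F s) (Iq F s); rewrite /fock_pairing big_cat => -> ->; apply: addr0.
- by rewrite -(fock_pairing_coef pq) Ip.
Qed.

Lemma fock_coef_commute m m' : weyl_commute m m' ->
  forall s, fock_coef (m ++ m') s = fock_coef (m' ++ m) s.
Proof.
move=> mm' s; have := fock_pairing_ideal mm' (fun _ => 1) s.
rewrite /fock_pairing /fock_apply /= !big_cons big_nil !mulr1 scale1r scaleN1r addr0.
by move/eqP; rewrite subr_eq0 => /eqP.
Qed.

End Fock.

Section TopCoefficients.
Variable R : nzRingType.
Implicit Types (p : {poly R}) (c e : R).

(* [p] is monic of degree [d] and [e] is its coefficient of [X^(d-1)], read as [0]
   when [d = 0]. *)
Definition top_coefs (d : nat) e p :=
  [/\ (size p <= d.+1)%N, p`_d = 1 & ('X * p)`_d = e].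

Lemma top_coefs1 : top_coefs 0 0 1.
Proof. by split; rewrite ?size_poly1 ?coef1 ?mulr1 ?coefX. Qed.

Lemma top_coefsM k c d e p : top_coefs d e p ->
  top_coefs (d + k.+1) (e + (if k is 0 then c else 0)) (('X^(k.+1) + c%:P) * p).
Proof.
case=> size_p lead_p sub_p; have p_hi i : (d < i)%N -> p`_i = 0.
  by move=> lt_di; apply: nth_default; apply: leq_trans size_p lt_di.
have coef_q i :
    (('X^(k.+1) + c%:P) * p)`_(i + k) = ('X * p)`_i + c * p`_(i + k).
  by rewrite mulrDl exprSr -mulrA coefD coefCM coefXnM ltnNge leq_addl addnK.
split.
- by apply: leq_trans (size_polyMleq _ _) _; rewrite size_XnaddC //; lia.
- by rewrite addnS -addSn coef_q coefXM lead_p p_hi ?mulr0 ?addr0 // ltn_addr.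
- rewrite coefXM addnS /= coef_q sub_p.
  by case: k {coef_q} => [|k]; rewrite ?addn0 ?lead_p ?mulr1 // p_hi ?mulr0 ?addr0 //; lia.
Qed.

Lemma top_coefs_uniq d d' e e' p : top_coefs d e p -> top_coefs d' e' p -> e = e'.
Proof.
have size_top d1 e1 : top_coefs d1 e1 p -> size p = d1.+1.
  case=> size_p lead_p _; apply/eqP; rewrite eqn_leq size_p ltnNge.
  by apply/negP => /(nth_default 0); rewrite lead_p => /eqP; rewrite oner_eq0.
move=> top top'; move: (size_top _ _ top); rewrite (size_top _ _ top') => -[dd'].
by case: top top' => _ _ <- [_ _ <-]; rewrite dd'.
Qed.

End TopCoefficients.

Section SubleadingCoefficient.
Variables (n : nat) (j : 'I_n).
Implicit Types (m u v w : word n).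

Fixpoint ann_suffix_weight w : CC :=
  if w is g :: w' then (if g == ann j then weight j w' else 0) + ann_suffix_weight w'
  else 0.

Lemma ann_suffix_weight_cat u v : ann_suffix_weight (u ++ v) =
  ann_suffix_weight u + ann_suffix_weight v + (mdeg_beta u j)%:R * weight j v.
Proof.
elim: u => [|g u IHu] /=; first by rewrite /mdeg_beta /= mul0r add0r addr0.
rewrite IHu weight_cat /mdeg_beta /= natrD -/(mdeg_beta u j).
by case: (g == ann j) => /=; ring.
Qed.

Definition probe_state : {ffun 'I_n -> {poly CC}} := [ffun l => 'X^((l != j).+1)].

Lemma fock_coef_top w :
  exists d, top_coefs d (ann_suffix_weight w) (fock_coef w probe_state).
Proof.
elim: w => [|g w [d IHw]] /=; first by exists 0%N; apply: top_coefs1.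
case: g => i /=; last by exists d; rewrite mul1r add0r.
exists (d + (i != j).+1)%N; rewrite ffunE ffunE alg_polyC addrC.
have := top_coefsM (i != j) (weight i w) IHw.
by rewrite ann_eq; case: (eqVneq i j) => [->|].
Qed.

Lemma weyl_commute_mdeg m m' : weyl_commute m m' ->
  (mdeg_beta m j * mdeg_alpha m' j = mdeg_alpha m j * mdeg_beta m' j)%N.
Proof.
move=> mm'; have [d top] := fock_coef_top (m ++ m').
have [d' top'] := fock_coef_top (m' ++ m).
rewrite fock_coef_commute // in top.
have := top_coefs_uniq top top'; rewrite !ann_suffix_weight_cat /weight => E.
have : (mdeg_beta m j)%:R * (mdeg_alpha m' j)%:R
       - (mdeg_alpha m j)%:R * (mdeg_beta m' j)%:R = 0 :> CC.
  by move/eqP: E; rewrite -subr_eq0 => /eqP <-; ring.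
by move/eqP; rewrite subr_eq0 -!natrM eqr_nat => /eqP.
Qed.

End SubleadingCoefficient.

Lemma weyl_commute_balanced_at n (m m' : word n) j :
  mdeg_alpha m' j = mdeg_beta m' j -> mdeg_alpha m' j <> 0 ->
  weyl_commute m m' -> mdeg_alpha m j = mdeg_beta m j.
Proof.
move=> bal' /eqP nz' /(weyl_commute_mdeg j); rewrite -bal' => /eqP.
by rewrite eqn_pmul2r ?lt0n // eq_sym => /eqP.
Qed.

Local Close Scope ring_scope.

Theorem corollary1 :
  (forall m mh : word 1,
     let r := mdeg_alpha m ord0 in let s := mdeg_beta m ord0 in
     let rh := mdeg_alpha mh ord0 in let sh := mdeg_beta mh ord0 in
     (weyl_commute m mh -> s * rh = r * sh)
     /\ (rh = sh -> rh <> 0 -> weyl_commute m mh -> r = s))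
  /\
  (forall (n : nat), 0 < n -> forall m mh : word n,
     (weyl_commute m mh ->
        forall j : 'I_n, mdeg_beta m j * mdeg_alpha mh j = mdeg_alpha m j * mdeg_beta mh j)
     /\ ((forall j : 'I_n, mdeg_alpha mh j = mdeg_beta mh j) -> weyl_commute m mh ->
        forall j : 'I_n, mdeg_alpha mh j <> 0 -> mdeg_alpha m j = mdeg_beta m j))
  /\
  (forall (n : nat), 0 < n -> forall m mt : word n,
     (forall j : 'I_n, mdeg_alpha mt j = mdeg_beta mt j) ->
     (weyl_commute m mt <->
        forall j : 'I_n, mdeg_alpha mt j <> 0 -> mdeg_alpha m j = mdeg_beta m j)).
Proof.
split; [|split].
- move=> m mh r s rh sh; split; first exact: weyl_commute_mdeg.
  exact: weyl_commute_balanced_at.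
- move=> n _ m mh; split=> [mmh j | bal mmh j nz]; first exact: weyl_commute_mdeg.
  exact: weyl_commute_balanced_at (bal j) nz mmh.
- move=> n _ m mt bal; split=> [mmt j nz | m_bal].
    exact: weyl_commute_balanced_at (bal j) nz mmt.
  apply: weyl_commute_balanced => // g g_mt; apply: m_bal; apply/eqP.
  exact: balanced_mdeg_alpha.
Qed.
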